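(* Let $m \ge n$ and let $\mathbf{A} \in \mathbb{R}^{m\times n}$ have rank $n$. Let $\mathbf{A} = \mathbf{Q}\mathbf{R}$ be its reduced QR decomposition, with $\mathbf{Q} \in \mathbb{R}^{m\times n}$ satisfying $\mathbf{Q}^T\mathbf{Q} = \mathbf{I}_n$ and $\mathbf{R}\in\mathbb{R}^{n\times n}$ upper triangular (hence invertible). Suppose $\mathbf{A}' \mapsto (\mathbf{Q}(\mathbf{A}'),\mathbf{R}(\mathbf{A}'))$ is a differentiable map, defined on a neighborhood of $\mathbf{A}$, giving such a decomposition $\mathbf{A}'=\mathbf{Q}(\mathbf{A}')\mathbf{R}(\mathbf{A}')$ for every $\mathbf{A}'$ in that neighborhood (e.g. the QR decomposition normalized so that $\mathbf{R}$ has positive diagonal). Let $\bar{\mathbf{Q}}\in\mathbb{R}^{m\times n}$ and $\bar{\mathbf{R}}\in\mathbb{R}^{n\times n}$ be arbitrary (upstream gradients). Then the reverse-mode gradient of $\mathbf{A}$ is $$\bar{\mathbf{A}} = \left[\bar{\mathbf{Q}} + \mathbf{Q}\,\mathrm{copyltu}(\mathbf{M})\right]\mathbf{R}^{-T},\qquad \mathbf{M} = \mathbf{R}\bar{\mathbf{R}}^T - \bar{\mathbf{Q}}^T\mathbf{Q}.$$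
   Context: Reverse-mode gradient: given a differentiable map $\mathbf{A}\mapsto(\mathbf{Q}(\mathbf{A}),\mathbf{R}(\mathbf{A}))$ and upstream matrices $\bar{\mathbf{Q}},\bar{\mathbf{R}}$ of the same shapes as $\mathbf{Q},\mathbf{R}$, the gradient $\bar{\mathbf{A}}$ is the unique matrix of the shape of $\mathbf{A}$ such that $\mathrm{Tr}(\bar{\mathbf{A}}^T d\mathbf{A}) = \mathrm{Tr}(\bar{\mathbf{Q}}^T d\mathbf{Q}) + \mathrm{Tr}(\bar{\mathbf{R}}^T d\mathbf{R})$ for every direction $d\mathbf{A}$, where $d\mathbf{Q}, d\mathbf{R}$ are the directional derivatives of $\mathbf{Q},\mathbf{R}$ at $\mathbf{A}$ in direction $d\mathbf{A}$. For a square matrix $\mathbf{M}$, $\mathrm{copyltu}(\mathbf{M})$ is the symmetric matrix with entries $\mathrm{copyltu}(\mathbf{M})_{ij} = \mathbf{M}_{\max(i,j),\min(i,j)}$ (the lower triangle of $\mathbf{M}$ copied to the upper triangle); equivalently $\mathrm{copyltu}(\mathbf{M}) = \mathrm{sym}(\mathbf{M}\circ\mathbf{E})$, where $\mathrm{sym}(\mathbf{B}) = (\mathbf{B}+\mathbf{B}^T)/2$, $\circ$ is the entrywise (Hadamard) product, and $\mathbf{E}$ is the matrix with $e_{ij}=0$ if $i<j$, $e_{ij}=1$ if $i=j$, $e_{ij}=2$ if $i>j$. $\mathbf{R}^{-T}$ denotes $(\mathbf{R}^{-1})^T$. *)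

From HB Require Import structures.
From mathcomp Require Import all_boot all_order all_algebra.
From mathcomp Require Import all_classical all_reals all_analysis.
Set Implicit Arguments. Unset Strict Implicit. Unset Printing Implicit Defensive.
Import Order.TTheory GRing.Theory Num.Theory.
Local Open Scope ring_scope.

Definition upper_triangular (R : pzRingType) (n : nat) (M : 'M[R]_n) : Prop :=
  forall i j : 'I_n, (j < i)%N -> M i j = 0.

Definition copyltu (R : pzRingType) (n : nat) (M : 'M[R]_n) : 'M[R]_n :=
  \matrix_(i, j) M (Order.max i j) (Order.min i j).

From HB Require Import structures.
From mathcomp Require Import all_boot all_order all_algebra.
From mathcomp Require Import all_classical all_reals all_analysis matrix_normedtype.
Import numFieldNormedType.Exports.
Import Order.TTheory GRing.Theory Num.Theory.
Local Open Scope ring_scope.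

Set Implicit Arguments. Unset Strict Implicit.

(* Write dQ, dR for the differentials of Q, R at A in the direction dA.
   Differentiating the identities A' = Q(A') R(A'), Q(A')^T Q(A') = I and
   "R(A') is upper triangular", which hold near A, gives
     dA = dQ R + Q dR,   dQ^T Q + Q^T dQ = 0,   dR upper triangular.
   The theorem is then pure linear algebra: expanding tr(Abar^T dA), the term
   tr(copyltu(M) Q^T dQ) vanishes (symmetric against skew-symmetric), and
   against the upper triangular dR R^-1 the matrix copyltu(M) can be replaced
   by M, whose remaining contribution is tr(R Rbar^T dR R^-1) = tr(Rbar^T dR). *)

Section MatrixCalculus.
Variables (R : numFieldType) (U : normedModType R).

Definition mx_entry p q (i : 'I_p) (j : 'I_q) (M : 'M[R]_(p, q)) : R := M i j.

Lemma mx_entry_is_linear p q i j : linear (@mx_entry p q i j).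
Proof. by move=> a M N; rewrite /mx_entry !mxE. Qed.

HB.instance Definition _ p q i j :=
  GRing.isLinear.Build R 'M[R]_(p, q) R _ (@mx_entry p q i j)
    (@mx_entry_is_linear p q i j).

Lemma is_diff_entry p q (f df : U -> 'M[R]_(p, q)) x i j :
  is_diff x f df -> is_diff x (fun X => f X i j) (fun v => df v i j).
Proof.
move=> dfx; have dent : is_diff (f x) (@mx_entry p q i j) (@mx_entry p q i j).
  apply: DiffDef; first exact/linear_differentiable/coord_continuous.
  by rewrite diff_lin //; exact: coord_continuous.
exact: (@is_diff_comp _ _ _ _ f df (@mx_entry p q i j)).
Qed.

Lemma is_diff_sum (V W : normedModType R) n (f df : 'I_n -> V -> W) x :
  (forall k, is_diff x (f k) (df k)) ->
  is_diff x (\sum_(k < n) f k) (\sum_(k < n) df k).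
Proof.
move=> dfx; elim/big_ind2: _ => // [|? ? ? ? ? ?]; first exact: (is_diff_cst 0 x).
exact: is_diffD.
Qed.

Lemma is_diff_mx p q (f df : U -> 'M[R]_(p, q)) x :
  (forall i j, is_diff x (fun X => f X i j) (fun v => df v i j)) ->
  is_diff x f df.
Proof.
move=> dfx.
have -> : f = \sum_(i < p) \sum_(j < q) (fun X => f X i j *: delta_mx i j).
  apply/funext => X; rewrite [LHS]matrix_sum_delta !fct_sumE.
  by under [RHS]eq_bigr do rewrite fct_sumE.
apply: is_diff_eq.
  apply: is_diff_sum => i; apply: is_diff_sum => j.
  apply: DiffDef; first exact/differentiableZl/ex_diff.
  by rewrite diffZl ?diff_val.
apply/funext => v; rewrite [RHS]matrix_sum_delta !fct_sumE.
by apply: eq_bigr => i _; rewrite fct_sumE.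
Qed.

Lemma is_diff_trmx p q (f df : U -> 'M[R]_(p, q)) x :
  is_diff x f df -> is_diff x (fun X => (f X)^T) (fun v => (df v)^T).
Proof.
move=> dfx; apply: is_diff_mx => i j.
under eq_fun do rewrite mxE.
under [X in is_diff _ _ X]eq_fun do rewrite mxE.
exact: is_diff_entry.
Qed.

Lemma is_diff_mulmx p q r (f df : U -> 'M[R]_(p, q)) (g dg : U -> 'M[R]_(q, r)) x :
  is_diff x f df -> is_diff x g dg ->
  is_diff x (fun X => f X *m g X) (fun v => df v *m g x + f x *m dg v).
Proof.
move=> dfx dgx; apply: is_diff_mx => i j.
have -> : (fun X => (f X *m g X) i j) =
    \sum_(k < q) ((fun X => f X i k) * (fun X => g X k j)).
  by apply/funext => X; rewrite mxE fct_sumE.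
apply: is_diff_eq; first by apply: is_diff_sum => k; apply: is_diffM;
  exact: is_diff_entry.
apply/funext => v; rewrite fct_sumE !mxE -big_split /=.
apply: eq_bigr => k _ /=.
by rewrite !fctE addrC; congr (_ + _); apply: mulrC.
Qed.

Lemma near_eq_is_diff (V W : normedModType R) (f g df dg : V -> W) x :
  (\forall y \near x, f y = g y) -> is_diff x f df -> is_diff x g dg ->
  forall v, df v = dg v.
Proof.
move=> fg [df_ex <-] [dg_ex <-] v.
by rewrite -!deriveE //; apply: near_eq_derive.
Qed.

End MatrixCalculus.

Section TriangularAlgebra.
Variable R : numFieldType.

Lemma upper_triangular_unit_diag n (T : 'M[R]_n) :
  upper_triangular T -> T \in unitmx -> forall i, T i i != 0.
Proof.
move=> upT uT i; apply/eqP => Tii0; move: uT.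
rewrite unitmxE -det_tr det_trig; last first.
  by apply/is_trig_mxP => a b ab; rewrite mxE upT.
by rewrite (bigD1 i) //= mxE Tii0 mul0r unitr0.
Qed.

Lemma upper_triangular_mulmx_cancel n (X T : 'M[R]_n) :
  upper_triangular T -> (forall i, T i i != 0) ->
  upper_triangular (X *m T) -> upper_triangular X.
Proof.
move=> upT diagT upXT.
suff col_ind k (i j : 'I_n) : nat_of_ord j = k -> (j < i)%N -> X i j = 0.
  by move=> i j; apply: col_ind.
elim/ltn_ind: k i j => k IH i j jk ji.
have := upXT i j ji; rewrite mxE (bigD1 j) //= big1 ?addr0.
  by move/eqP; rewrite mulf_eq0 (negbTE (diagT j)) orbF => /eqP.
move=> l lj; case: (ltngtP l j) => [lj'|jl|/val_inj el].
- by rewrite (IH l) ?mul0r //; [rewrite -jk | apply: ltn_trans ji].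
- by rewrite upT ?mulr0.
- by rewrite el eqxx in lj.
Qed.

Lemma upper_triangular_mul_invmx n (U T : 'M[R]_n) :
  upper_triangular U -> upper_triangular T -> T \in unitmx ->
  upper_triangular (U *m invmx T).
Proof.
move=> upU upT uT.
apply: (upper_triangular_mulmx_cancel upT (upper_triangular_unit_diag upT uT)).
by rewrite -mulmxA mulVmx // mulmx1.
Qed.

Lemma copyltu_tr n (M : 'M[R]_n) : (copyltu M)^T = copyltu M.
Proof. by apply/matrixP => i j; rewrite !mxE maxC minC. Qed.

Lemma copyltu_lower n (M : 'M[R]_n) (i j : 'I_n) :
  (j <= i)%N -> copyltu M i j = M i j.
Proof.
move=> ji; have ij : (j <= i)%O by rewrite leEord.
by rewrite mxE (max_idPl ij) (min_idPr ij).
Qed.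

(* Hence replacing M by copyltu M is invisible against an upper triangular
   factor: copyltu M - M vanishes on and below the diagonal. *)
Lemma mxtrace_copyltu_upper n (M U : 'M[R]_n) :
  upper_triangular U -> \tr ((copyltu M - M) *m U) = 0.
Proof.
move=> upU; rewrite /mxtrace big1 // => i _; rewrite mxE big1 // => j _.
case: (leqP j i) => [ji|ij]; last by rewrite upU ?mulr0.
by rewrite [(_ - M) i j]mxE [(- M) i j]mxE copyltu_lower ?subrr ?mul0r.
Qed.

Lemma mxtrace_sym_skew n (K S : 'M[R]_n) :
  K^T = K -> S^T = - S -> \tr (K *m S) = 0.
Proof.
move=> KT ST; apply/eqP; rewrite -[_ == 0](mulrn_eq0 _ 2) mulr2n.
rewrite -{2}mxtrace_tr trmx_mul ST KT mulNmx linearN /= mxtrace_mulC.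
by rewrite subrr.
Qed.

Lemma qr_backprop_pairing m n (Q dQ Qbar : 'M[R]_(m, n)) (T dT Tbar : 'M[R]_n)
    (dA : 'M[R]_(m, n)) :
  Q^T *m Q = 1%:M -> T \in unitmx -> upper_triangular T -> upper_triangular dT ->
  dA = dQ *m T + Q *m dT -> dQ^T *m Q + Q^T *m dQ = 0 ->
  let M := T *m Tbar^T - Qbar^T *m Q in
  let Abar := (Qbar + Q *m copyltu M) *m (invmx T)^T in
  \tr (Abar^T *m dA) = \tr (Qbar^T *m dQ) + \tr (Tbar^T *m dT).
Proof.
move=> QQ uT upT updT -> skew M Abar.
set K := copyltu M; set X := Qbar^T + K *m Q^T.
have AbarT : Abar^T = invmx T *m X.
  by rewrite /Abar trmx_mul trmxK linearD /= trmx_mul copyltu_tr.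
have QdQ_skew : (Q^T *m dQ)^T = - (Q^T *m dQ).
  by apply/eqP; rewrite -addr_eq0 trmx_mul trmxK skew.
have XQ : X *m Q = (K - M) + T *m Tbar^T.
  by rewrite mulmxDl -mulmxA QQ mulmx1 /M opprB addrCA addrA subrK.
rewrite AbarT -mulmxA mxtrace_mulC mulmxDr mulmxDl mxtraceD.
rewrite -!mulmxA mulmxV // mulmx1 [X *m (Q *m _)]mulmxA XQ /X mulmxDl mxtraceD.
rewrite -mulmxA (mxtrace_sym_skew (copyltu_tr M) QdQ_skew) addr0.
rewrite mulmxDl mxtraceD mxtrace_copyltu_upper ?add0r; last first.
  exact: upper_triangular_mul_invmx.
by congr (_ + _); rewrite -mulmxA mxtrace_mulC -!mulmxA mulVmx // mulmx1.
Qed.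

End TriangularAlgebra.

Theorem proposition1 (R : realType) (m n : nat) (A : 'M[R]_(m, n))
  (Qf : 'M[R]_(m, n) -> 'M[R]_(m, n)) (Rf : 'M[R]_(m, n) -> 'M[R]_n)
  (Qbar : 'M[R]_(m, n)) (Rbar : 'M[R]_n) :
  (n <= m)%N ->
  \rank A = n ->
  (\forall A' \near A,
      A' = Qf A' *m Rf A' /\ (Qf A')^T *m Qf A' = 1%:M /\ upper_triangular (Rf A')) ->
  differentiable Qf A -> differentiable Rf A ->
  let Q := Qf A in let Rm := Rf A in
  let M := Rm *m Rbar^T - Qbar^T *m Q in
  let Abar := (Qbar + Q *m copyltu M) *m (invmx Rm)^T in
  forall dA : 'M[R]_(m, n),
    \tr (Abar^T *m dA) = \tr (Qbar^T *m ('d Qf A dA)) + \tr (Rbar^T *m ('d Rf A dA)).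
Proof.
move=> _ rankA nearQR /differentiableP dQ /differentiableP dR Q Rm M Abar dA.
have [A_QR [QQ upR]] := nbhs_singleton nearQR.
have unitR : Rm \in unitmx.
  rewrite -row_free_unit /row_free; apply/eqP/anti_leq.
  by rewrite rank_leq_row /= -{1}rankA A_QR mxrankM_maxr.
have dA_QR : dA = 'd Qf A dA *m Rm + Q *m 'd Rf A dA.
  have QR_near : \forall X \near A, id X = Qf X *m Rf X.
    by apply: filterS nearQR => X [].
  exact: near_eq_is_diff QR_near (is_diff_id A) (is_diff_mulmx dQ dR) dA.
have dQQ : ('d Qf A dA)^T *m Q + Q^T *m 'd Qf A dA = 0.
  have QQ_near : \forall X \near A, cst 1%:M X = (Qf X)^T *m Qf X.
    by apply: filterS nearQR => X [_ []].
  exact/esym/(near_eq_is_diff QQ_near (is_diff_cst 1%:M A)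
    (is_diff_mulmx (is_diff_trmx dQ) dQ)).
have dR_upper : upper_triangular ('d Rf A dA).
  move=> i j ji; have R_near : \forall X \near A, cst 0 X = Rf X i j.
    by apply: filterS nearQR => X [_ [_ upX]]; rewrite upX.
  exact/esym/(near_eq_is_diff R_near (is_diff_cst 0 A) (is_diff_entry i j dR)).
by have := qr_backprop_pairing Qbar Rbar QQ unitR upR dR_upper dA_QR dQQ.
Qed.
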